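(* Let either $N\ge3$ and $1<p<\frac{N}{N-2}$, or $N=2$ and $p>1$, and let $M\le-\mu^*$. Let $(x(t),y(t))$ be the trajectory associated with a regular solution of (E). Then (i) it cannot converge to $P_{1,M}$ as $t\to\infty$ with $t\mapsto x(t)$ increasing; (ii) it cannot intersect the half-line $\{y=\frac{2}{p-1}x\}$ at a point strictly between $(0,0)$ and $P_{1,M}$.
   Context: (E) denotes the ODE $-u_{rr}-\frac{N-1}{r}u_r=|u|^{p-1}u+M|u_r|^{\frac{2p}{p+1}}$ for $r>0$. A regular solution is the $C^2$ solution on a maximal interval $[0,r_0)$ with $u(0)=u_0>0$, $u_r(0)=0$; its trajectory is $t=\ln r$, $x(t)=r^{\frac{2}{p-1}}u(r)$, $y(t)=-r^{\frac{p+1}{p-1}}u_r(r)$. Let $K=\frac{(N-2)p-N}{p-1}$, $\mu^*=(p+1)\left(\frac{N-(N-2)p}{2p}\right)^{\frac{p}{p+1}}$. For $M<-\mu^*$ the equation $X^{p-1}+M\left(\frac{2}{p-1}\right)^{\frac{2p}{p+1}}X^{\frac{p-1}{p+1}}-\frac{2K}{p-1}=0$ has two positive roots $X_{1,M}<X_{2,M}$; for $M=-\mu^*$ it has a unique positive root, denoted $X_{1,M}$. $P_{1,M}=(X_{1,M},\frac{2}{p-1}X_{1,M})$. *)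

From Stdlib Require Import Reals.
From Coquelicot Require Import Coquelicot.
Open Scope R_scope.

(* Real power x^a, with the convention 0^a = 0 (used only with a > 0,
   where this is the usual value) and not used for x < 0. *)
Definition powp (x a : R) : R := if Rlt_dec 0 x then Rpower x a else 0.

Definition rderive (f : R -> R) (x l : R) : Prop :=
  filterlim (fun h => (f (x + h) - f x) / h) (at_right 0) (locally l).

Definition E_holds (N : nat) (p M : R) (r u0 u1 u2 : R) : Prop :=
  - u2 - (INR N - 1) / r * u1
  = powp (Rabs u0) (p - 1) * u0 + M * powp (Rabs u1) (2 * p / (p + 1)).

Definition C2_solution_on (N : nat) (p M : R) (u : R -> R) (r0 : Rbar) : Prop :=
  Rbar_lt 0 r0 /\
  exists u1 u2 : R -> R,
    (forall r, 0 < r -> Rbar_lt r r0 ->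
        is_derive u r (u1 r) /\ is_derive u1 r (u2 r) /\ continuous u2 r
        /\ E_holds N p M r (u r) (u1 r) (u2 r)) /\
    rderive u 0 (u1 0) /\ rderive u1 0 (u2 0) /\
    filterlim u2 (at_right 0) (locally (u2 0)) /\
    u1 0 = 0.

Definition regular_solution (N : nat) (p M u0 : R) (u : R -> R) (r0 : Rbar) : Prop :=
  0 < u0 /\ u 0 = u0 /\ C2_solution_on N p M u r0 /\
  (forall (v : R -> R) (r1 : Rbar), Rbar_lt r0 r1 -> C2_solution_on N p M v r1 ->
     ~ (forall r, 0 <= r -> Rbar_lt r r0 -> v r = u r)).

(* Trajectory: t = ln r, x(t) = r^(2/(p-1)) u(r), y(t) = -r^((p+1)/(p-1)) u_r(r). *)
Definition traj_x (p : R) (u : R -> R) (t : R) : R :=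
  powp (exp t) (2 / (p - 1)) * u (exp t).
Definition traj_y (p : R) (u : R -> R) (t : R) : R :=
  - (powp (exp t) ((p + 1) / (p - 1)) * Derive u (exp t)).

Definition Kc (N : nat) (p : R) : R := ((INR N - 2) * p - INR N) / (p - 1).
Definition mu_star (N : nat) (p : R) : R :=
  (p + 1) * powp ((INR N - (INR N - 2) * p) / (2 * p)) (p / (p + 1)).

(* The function whose positive roots define X_{1,M}, X_{2,M}. *)
Definition Xeq (N : nat) (p M X : R) : R :=
  powp X (p - 1) + M * powp (2 / (p - 1)) (2 * p / (p + 1)) * powp X ((p - 1) / (p + 1))
  - 2 * Kc N p / (p - 1).

(* X is X_{1,M}: the smallest positive root (the smaller of the two roots if
   M < -mu_star, the unique one if M = -mu_star). *)
Definition is_X1 (N : nat) (p M X : R) : Prop :=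
  0 < X /\ Xeq N p M X = 0 /\ (forall Y, 0 < Y -> Xeq N p M Y = 0 -> X <= Y).

(* Let alpha = 2/(p-1), beta = (p+1)/2, q = 2p/(p+1) and, along the solution, x = r^alpha u,
   y = -r^(alpha+1) u' (the trajectory in t = ln r), Q = y/x, Z = y/x^beta and
   omega(x) = x^((p-1)/2), so that Q = Z omega(x).  Where u > 0 the equation gives
     r Z' = omega(x) Hf(Z) - (N-1) Z  (when u' < 0),     r Q' = Xeq(x)  (when Q = alpha),
   with Hf(z) = 1 + M z^q + beta z^2.  The substitution X = (alpha/z)^alpha turns Xeq(X) into
   (alpha/z)^2 Ef(z), Ef(z) = 1 + M z^q - (K/alpha) z^2, and P_{1,M} corresponds to
   Z = lam := alpha / omega(X_{1,M}).  As K < 0 and X_{1,M} is the smallest positive root,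
   Xeq > 0 on (0, X_{1,M}), and Ef vanishes at lam and is positive beyond it; so Ef'(lam) >= 0,
   whence omega(X_{1,M}) Hf(z) <= (N-1) z for z slightly below lam, and there Z' < 0 as long as
   x < X_{1,M}.  Thus, while x < X_{1,M}, Z cannot cross lam upwards and Q can cross alpha only
   upwards; moreover Z is small near r = 0.
   (ii) Just before a point with Q = alpha and 0 < x < X_{1,M} we have u > 0, Z > lam and
   Q < alpha.  Going backwards in r inside this region u increases and x decreases, so the region
   could only be left through Z = lam or Q = alpha, which is excluded; yet near r = 0 we are
   outside it.
   (i) If x increases to X_{1,M}, then u > 0, x < X_{1,M} and Z <= lam everywhere.  Since
   y = Z x^beta tends to alpha X_{1,M} = lam X_{1,M}^beta, Z eventually enters the band where it
   strictly decreases, after which y stays a fixed distance below alpha X_{1,M}. *)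

From Stdlib Require Import Reals Lra Classical.
From Coquelicot Require Import Coquelicot.
Open Scope R_scope.

Lemma continuous_locally_gt (g : R -> R) (x c : R) :
  continuous g x -> c < g x -> locally x (fun y => c < g y).
Proof. intros Hg Hc. exact (Hg _ (open_gt c (g x) Hc)). Qed.

Lemma continuous_locally_lt (g : R -> R) (x c : R) :
  continuous g x -> g x < c -> locally x (fun y => g y < c).
Proof. intros Hg Hc. exact (Hg _ (open_lt c (g x) Hc)). Qed.

Lemma at_right_exists (x b : R) (P : R -> Prop) :
  x < b -> at_right x P -> exists y, x < y < b /\ P y.
Proof.
  intros Hxb HP.
  apply (filter_ex (F := at_right x)).
  apply filter_and; [apply filter_and|exact HP].
  - now apply (filter_forall (F := locally x)).
  - exact (filter_le_within _ _ (open_lt b x Hxb)).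
Qed.

Lemma at_left_exists (a x : R) (P : R -> Prop) :
  a < x -> at_left x P -> exists y, a < y < x /\ P y.
Proof.
  intros Hax HP.
  apply (filter_ex (F := at_left x)).
  apply filter_and; [apply filter_and|exact HP].
  - exact (filter_le_within _ _ (open_gt a x Hax)).
  - now apply (filter_forall (F := locally x)).
Qed.

Lemma continuous_closed_right (g : R -> R) (D : R -> Prop) (x b : R) :
  continuous g x -> closed D -> x < b -> (forall y, x < y < b -> D (g y)) -> D (g x).
Proof.
  intros Hg HD Hxb HgD.
  apply (closed_filterlim_loc (F := at_right x) g); [| |exact HD].
  - exact (filterlim_filter_le_1 g (filter_le_within _) Hg).
  - apply (filter_imp (F := locally x) (fun y => y < b)); [|exact (open_lt b x Hxb)].
    intros y Hyb Hxy. apply HgD. lra.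
Qed.

Lemma is_derive_sign (g : R -> R) (x d : R) : is_derive g x d -> d <> 0 ->
  locally x (fun y => y <> x -> 0 < d * ((g y - g x) * (y - x))).
Proof.
  intros Hd Hd0. apply is_derive_Reals in Hd.
  destruct (Hd (Rabs d) (Rabs_pos_lt d Hd0)) as [del Hdel].
  exists del. intros y. change R in y. intros Hy Hyx.
  specialize (Hdel (y - x) ltac:(lra) Hy). replace (x + (y - x)) with y in Hdel by ring.
  set (q := (g y - g x) / (y - x)) in Hdel.
  replace ((g y - g x) * (y - x)) with (q * (y - x) ^ 2) by (unfold q; field; lra).
  assert (0 < (y - x) ^ 2) by (apply pow2_gt_0; lra).
  assert (0 < d * q).
  { apply Rabs_def2 in Hdel.
    destruct (Rle_lt_dec 0 d); [rewrite Rabs_pos_eq in Hdel | rewrite Rabs_left in Hdel]; nra. }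
  nra.
Qed.

Lemma is_derive_pos_right (g : R -> R) (x d : R) :
  is_derive g x d -> 0 < d -> at_right x (fun y => g x < g y).
Proof.
  intros Hd Hpos. generalize (is_derive_sign g x d Hd ltac:(lra)).
  unfold at_right, within. apply filter_imp. intros y Hy Hxy. specialize (Hy ltac:(lra)).
  assert (0 < (g y - g x) * (y - x)) by (apply (Rmult_lt_reg_l d); lra). nra.
Qed.

Lemma is_derive_pos_left (g : R -> R) (x d : R) :
  is_derive g x d -> 0 < d -> at_left x (fun y => g y < g x).
Proof.
  intros Hd Hpos. generalize (is_derive_sign g x d Hd ltac:(lra)).
  unfold at_left, within. apply filter_imp. intros y Hy Hyx. specialize (Hy ltac:(lra)).
  assert (0 < (g y - g x) * (y - x)) by (apply (Rmult_lt_reg_l d); lra). nra.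
Qed.

Lemma is_derive_neg_right (g : R -> R) (x d : R) :
  is_derive g x d -> d < 0 -> at_right x (fun y => g y < g x).
Proof.
  intros Hd Hneg. generalize (is_derive_sign g x d Hd ltac:(lra)).
  unfold at_right, within. apply filter_imp. intros y Hy Hxy. specialize (Hy ltac:(lra)).
  assert (0 < (g x - g y) * (y - x)) by (apply (Rmult_lt_reg_l (- d)); lra). nra.
Qed.

Lemma is_derive_nonneg_left_bound (g : R -> R) (x d eps : R) :
  is_derive g x d -> 0 <= d -> 0 < eps ->
  locally x (fun z => z <= x -> g z - g x <= eps * (x - z)).
Proof.
  intros Hd Hd0 Heps. apply is_derive_Reals in Hd.
  destruct (Hd eps Heps) as [del Hdel].
  exists del. intros z. change R in z. intros Hz Hzx.
  destruct (Req_dec z x) as [->|Hne]; [lra|].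
  specialize (Hdel (z - x) ltac:(lra) Hz). replace (x + (z - x)) with z in Hdel by ring.
  apply Rabs_def2 in Hdel.
  replace (g z - g x) with ((g z - g x) / (z - x) * (z - x)) by (field; lra).
  nra.
Qed.

Lemma derive_pos_increasing (g dg : R -> R) (a b : R) : a < b ->
  (forall c, a <= c <= b -> is_derive g c (dg c)) -> (forall c, a < c < b -> 0 < dg c) ->
  g a < g b.
Proof.
  intros Hab Hd Hpos.
  destruct (MVT_cor2 g dg a b Hab) as [c [Hc Hac]].
  - intros c Hc. now apply is_derive_Reals, Hd.
  - specialize (Hpos c Hac). nra.
Qed.

Lemma derive_neg_decreasing (g dg : R -> R) (a b : R) : a < b ->
  (forall c, a <= c <= b -> is_derive g c (dg c)) -> (forall c, a < c < b -> dg c < 0) ->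
  g b < g a.
Proof.
  intros Hab Hd Hneg.
  destruct (MVT_cor2 g dg a b Hab) as [c [Hc Hac]].
  - intros c Hc. now apply is_derive_Reals, Hd.
  - specialize (Hneg c Hac). nra.
Qed.

Lemma last_exit (P : R -> Prop) (lo hi : R) : lo < hi -> ~ P lo -> P hi ->
  (forall r, lo <= r <= hi -> P r -> locally r P) ->
  exists rs, lo <= rs < hi /\ ~ P rs /\ (forall r, rs < r <= hi -> P r).
Proof.
  intros Hlh Hlo Hhi Hopen.
  set (E := fun r => lo <= r <= hi /\ ~ P r).
  destruct (completeness E) as [m [Hub Hlub]].
  - exists hi. intros r [Hr _]. lra.
  - exists lo. split; [lra | exact Hlo].
  assert (Hlom : lo <= m) by (apply Hub; split; [lra | exact Hlo]).
  assert (Hmhi : m <= hi) by (apply Hlub; intros r [Hr _]; lra).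
  assert (Hright : forall r, m < r <= hi -> P r).
  { intros r Hr. apply NNPP. intros HPr.
    assert (r <= m) by (apply Hub; split; [lra | exact HPr]). lra. }
  assert (HPm : ~ P m).
  { intros HPm. destruct (Hopen m ltac:(lra) HPm) as [eps Heps].
    assert (Hgap : forall r, E r -> r <= m - eps).
    { intros r [Hr HPr]. apply Rnot_lt_le. intros Hlt. apply HPr, Heps.
      assert (r <= m) by (apply Hub; split; [lra | exact HPr]).
      change (Rabs (r - m) < eps). rewrite Rabs_left1; lra. }
    pose proof (Hlub (m - eps) Hgap). pose proof (cond_pos eps). lra. }
  exists m. split; [|split; assumption].
  split; [lra|]. destruct (Req_dec m hi) as [->|]; [contradiction | lra].
Qed.

Lemma strictly_increasing_lt_lim (f : R -> R) (l : R) :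
  (forall t s, t < s -> f t < f s) -> is_lim f p_infty l -> forall t, f t < l.
Proof.
  intros Hinc Hlim t. apply Rlt_le_trans with (f (t + 1)); [apply Hinc; lra|].
  apply (is_lim_le_loc (fun _ => f (t + 1)) f p_infty (f (t + 1)) l);
    [| apply is_lim_const | exact Hlim].
  exists (t + 1). intros s Hs. left. now apply Hinc.
Qed.

Lemma rderive_right_continuous (f : R -> R) (l : R) :
  rderive f 0 l -> filterlim f (at_right 0) (locally (f 0)).
Proof.
  intros Hd. apply filterlim_locally. intros eps.
  set (k := Rabs l + 1). assert (Hk : 0 < k) by (pose proof (Rabs_pos l); unfold k; lra).
  assert (Hq : at_right 0 (fun h => Rabs ((f (0 + h) - f 0) / h - l) < 1))
    by exact (Hd _ (locally_ball l (mkposreal 1 Rlt_0_1))).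
  assert (Hh : at_right 0 (fun h => h < eps / k))
    by (apply filter_le_within, open_lt, Rdiv_lt_0_compat; [apply cond_pos | lra]).
  generalize (filter_and _ _ Hq Hh). unfold at_right, within. apply filter_imp.
  intros h Hqh Hh0. destruct (Hqh Hh0) as [Hq1 Hhk]. change (Rabs (f h - f 0) < eps).
  rewrite Rplus_0_l in Hq1.
  assert (Habs : Rabs ((f h - f 0) / h) < k).
  { pose proof (Rabs_triang ((f h - f 0) / h - l) l) as Htri. unfold k.
    replace ((f h - f 0) / h - l + l) with ((f h - f 0) / h) in Htri by ring. lra. }
  replace (f h - f 0) with (h * ((f h - f 0) / h)) by (field; lra).
  rewrite Rabs_mult, (Rabs_pos_eq h) by lra.
  apply Rlt_le_trans with (h * k); [apply Rmult_lt_compat_l; lra|].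
  apply Rmult_lt_compat_r with (r := k) in Hhk; [|lra].
  unfold Rdiv in Hhk. rewrite Rmult_assoc, Rinv_l, Rmult_1_r in Hhk by lra. lra.
Qed.

Lemma is_lim_p_infty_ln (f g : R -> R) (l : Rbar) :
  (forall r, 0 < r -> f (ln r) = g r) -> is_lim f p_infty l -> is_lim g p_infty l.
Proof.
  intros Hfg Hf. apply (is_lim_ext_loc (fun r => f (ln r))).
  - exists 0. intros r Hr. apply Hfg. lra.
  - apply (is_lim_comp f ln p_infty l p_infty Hf is_lim_ln_p). exists 0. intros r _. discriminate.
Qed.

Definition alpha (p : R) : R := 2 / (p - 1).
Definition beta (p : R) : R := (p + 1) / 2.
Definition omega (p x : R) : R := Rpower x ((p - 1) / 2).

Definition Ef (N : nat) (p M z : R) : R :=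
  1 + M * Rpower z (2 * p / (p + 1)) - Kc N p / alpha p * z ^ 2.
Definition Hf (p M z : R) : R := 1 + M * Rpower z (2 * p / (p + 1)) + beta p * z ^ 2.
Definition lam (p X1 : R) : R := alpha p / omega p X1.

Lemma Rpower_pos (x e : R) : 0 < Rpower x e.
Proof. apply exp_pos. Qed.

Lemma powp_Rpower (x e : R) : 0 < x -> powp x e = Rpower x e.
Proof. intros Hx. unfold powp. now destruct Rlt_dec. Qed.

Lemma Rpower_2 (x : R) : 0 < x -> Rpower x 2 = x ^ 2.
Proof. intros Hx. replace 2 with (INR 2) by (simpl; lra). now apply Rpower_pow. Qed.

Section Profile.

Variables (N : nat) (p M : R).
Hypothesis p_gt1 : 1 < p.

Lemma alpha_pos : 0 < alpha p.
Proof. unfold alpha. apply Rdiv_lt_0_compat; lra. Qed.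

Lemma Rpower_omega_alpha (x : R) : 0 < x -> Rpower (omega p x) (alpha p) = x.
Proof.
  intros Hx. unfold omega. rewrite Rpower_mult.
  replace ((p - 1) / 2 * alpha p) with 1 by (unfold alpha; field; lra).
  now apply Rpower_1.
Qed.

Lemma omega_lt (x y : R) : 0 < x -> x < y -> omega p x < omega p y.
Proof. intros. unfold omega. apply Rlt_Rpower_l; lra. Qed.

Lemma lam_pos (X1 : R) : 0 < lam p X1.
Proof. unfold lam. apply Rdiv_lt_0_compat; [apply alpha_pos | apply Rpower_pos]. Qed.

Lemma omega_lam (X1 : R) : omega p X1 * lam p X1 = alpha p.
Proof. unfold lam. pose proof (Rpower_pos X1 ((p - 1) / 2)). unfold omega in *. field. lra. Qed.

Lemma lam_Rpower_beta (X1 : R) : 0 < X1 -> lam p X1 * Rpower X1 (beta p) = alpha p * X1.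
Proof.
  intros HX. unfold lam, omega. replace (beta p) with ((p - 1) / 2 + 1) by (unfold beta; field).
  rewrite Rpower_plus, Rpower_1 by exact HX. pose proof (Rpower_pos X1 ((p - 1) / 2)). field. lra.
Qed.

Lemma Xeq_Ef (z : R) : 0 < z ->
  Xeq N p M (Rpower (alpha p / z) (alpha p)) = (alpha p / z) ^ 2 * Ef N p M z.
Proof.
  intros Hz. pose proof alpha_pos as Ha.
  set (b := alpha p / z). assert (Hb : 0 < b) by (apply Rdiv_lt_0_compat; lra).
  set (q := 2 * p / (p + 1)).
  unfold Xeq, Ef.
  rewrite !powp_Rpower by (apply Rpower_pos || (unfold alpha; apply Rdiv_lt_0_compat; lra)).
  rewrite !Rpower_mult.
  replace (alpha p * (p - 1)) with 2 by (unfold alpha; field; lra).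
  replace (alpha p * ((p - 1) / (p + 1))) with (2 + - q) by (unfold alpha, q; field; lra).
  rewrite Rpower_plus, Rpower_Ropp, Rpower_2 by assumption.
  replace (2 / (p - 1)) with (b * z) by (unfold b, alpha; field; lra).
  rewrite <- Rpower_mult_distr by assumption. fold q.
  assert (Hbz : alpha p = b * z) by (unfold b; field; lra).
  replace (2 * Kc N p / (p - 1)) with (Kc N p * alpha p) by (unfold alpha; field; lra).
  rewrite Hbz. assert (0 < Rpower b q) by apply Rpower_pos.
  field. lra.
Qed.

Section Root.

Variable X1 : R.
Hypothesis X1_root : is_X1 N p M X1.

Lemma Ef_lam : Ef N p M (lam p X1) = 0.
Proof.
  destruct X1_root as [HX [Hroot _]].
  pose proof (Xeq_Ef (lam p X1) (lam_pos X1)) as Hsub.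
  replace (alpha p / lam p X1) with (omega p X1) in Hsub
    by (pose proof (omega_lam X1); pose proof (lam_pos X1); field_simplify_eq; lra).
  rewrite Rpower_omega_alpha, Hroot in Hsub by assumption.
  assert (0 < omega p X1 ^ 2) by (apply pow_lt, Rpower_pos).
  nra.
Qed.

Lemma Ef_nonzero_above_lam (z : R) : lam p X1 < z -> Ef N p M z <> 0.
Proof.
  intros Hz HE. destruct X1_root as [HX [_ Hmin]].
  pose proof alpha_pos as Ha. pose proof (lam_pos X1) as Hl.
  pose proof (Xeq_Ef z ltac:(lra)) as Hsub. rewrite HE, Rmult_0_r in Hsub.
  specialize (Hmin _ (Rpower_pos _ _) Hsub).
  assert (Hlt : Rpower (alpha p / z) (alpha p) < Rpower (alpha p / lam p X1) (alpha p)).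
  { apply Rlt_Rpower_l; [assumption|]. split; [apply Rdiv_lt_0_compat; lra|].
    apply Rmult_lt_compat_l; [assumption|]. apply Rinv_lt_contravar; nra. }
  replace (alpha p / lam p X1) with (omega p X1) in Hlt
    by (pose proof (omega_lam X1); field_simplify_eq; lra).
  rewrite Rpower_omega_alpha in Hlt by assumption. lra.
Qed.

Hypothesis Kc_neg : Kc N p < 0.

Lemma Ef_ex_derive (z : R) : 0 < z -> ex_derive (Ef N p M) z.
Proof. intros Hz. unfold Ef, Rpower. auto_derive. lra. Qed.

Lemma Ef_eventually_pos (z : R) : 0 < z -> exists w, z < w /\ 0 < Ef N p M w.
Proof.
  intros Hz. set (q := 2 * p / (p + 1)). pose proof alpha_pos as Ha.
  assert (Hq : 0 < 2 - q) by (unfold q; apply Rlt_0_minus, Rlt_div_l; lra).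
  set (c := (Rabs M + 1) * alpha p / - Kc N p).
  assert (Hc : 0 < c) by (unfold c; pose proof (Rabs_pos M); apply Rdiv_lt_0_compat; nra).
  set (w := Rmax (z + 1) (Rpower c (/ (2 - q)))).
  exists w. split; [unfold w; pose proof (Rmax_l (z + 1) (Rpower c (/ (2 - q)))); lra|].
  assert (Hw : 0 < w) by (unfold w; pose proof (Rmax_l (z + 1) (Rpower c (/ (2 - q)))); lra).
  assert (Hcw : c <= Rpower w (2 - q)).
  { replace c with (Rpower (Rpower c (/ (2 - q))) (2 - q))
      by (rewrite Rpower_mult, Rinv_l, Rpower_1; lra).
    apply Rle_Rpower_l; [lra|]. split; [apply Rpower_pos | apply Rmax_r]. }
  assert (Hsplit : w ^ 2 = Rpower w q * Rpower w (2 - q))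
    by (rewrite <- Rpower_plus, <- Rpower_2 by lra; f_equal; ring).
  assert (Hbig : Rabs M + 1 <= - Kc N p / alpha p * Rpower w (2 - q)).
  { unfold c in Hcw. apply (Rmult_le_reg_l (alpha p / - Kc N p)); [apply Rdiv_lt_0_compat; lra|].
    replace (alpha p / - Kc N p * (- Kc N p / alpha p * Rpower w (2 - q))) with (Rpower w (2 - q))
      by (field; lra).
    replace (alpha p / - Kc N p * (Rabs M + 1)) with ((Rabs M + 1) * alpha p / - Kc N p)
      by (field; lra). lra. }
  unfold Ef. fold q. rewrite Hsplit.
  pose proof (Rpower_pos w q). pose proof (Rle_abs (- M)). rewrite Rabs_Ropp in *. nra.
Qed.

Lemma Ef_pos_above_lam (z : R) : lam p X1 < z -> 0 < Ef N p M z.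
Proof.
  intros Hz. pose proof (lam_pos X1) as Hl.
  destruct (Rtotal_order (Ef N p M z) 0) as [Hneg|[Hzero|Hpos]]; [exfalso | exfalso | exact Hpos].
  - destruct (Ef_eventually_pos z ltac:(lra)) as [w [Hzw Hw]].
    destruct (Ranalysis5.IVT_interv (Ef N p M) z w) as [v [Hv Hv0]]; [|assumption..|].
    + intros v Hv. apply continuity_pt_filterlim, (ex_derive_continuous (Ef N p M)).
      apply Ef_ex_derive. lra.
    + exact (Ef_nonzero_above_lam v ltac:(lra) Hv0).
  - exact (Ef_nonzero_above_lam z Hz Hzero).
Qed.

Lemma Xeq_pos_below_X1 (x : R) : 0 < x < X1 -> 0 < Xeq N p M x.
Proof.
  intros [Hx HxX]. pose proof alpha_pos as Ha.
  pose proof (Rpower_pos x ((p - 1) / 2)) as Hw.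
  set (z := alpha p / omega p x). assert (Hz : 0 < z) by (apply Rdiv_lt_0_compat; assumption).
  replace x with (Rpower (alpha p / z) (alpha p))
    by (unfold z; replace (alpha p / (alpha p / omega p x)) with (omega p x)
          by (unfold omega in *; field; lra); now apply Rpower_omega_alpha).
  rewrite Xeq_Ef by assumption.
  apply Rmult_lt_0_compat; [apply pow_lt, Rdiv_lt_0_compat; assumption|].
  apply Ef_pos_above_lam. unfold z, lam. apply Rmult_lt_compat_l; [assumption|].
  apply Rinv_lt_contravar; [apply Rmult_lt_0_compat; apply Rpower_pos|]. now apply omega_lt.
Qed.

Lemma Hf_Ef (z : R) : Hf p M z = Ef N p M z + (INR N - 1) / alpha p * z ^ 2.
Proof. unfold Hf, Ef, beta, Kc, alpha. field. lra. Qed.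

Lemma Hf_le_below_lam : 1 < INR N ->
  exists del, 0 < del < lam p X1 /\
    forall z, lam p X1 - del < z <= lam p X1 -> omega p X1 * Hf p M z <= (INR N - 1) * z.
Proof.
  intros HN. pose proof (lam_pos X1) as Hl. pose proof alpha_pos as Ha.
  set (l := lam p X1) in *.
  destruct (Ef_ex_derive l Hl) as [d Hd].
  assert (Hd0 : 0 <= d).
  { apply Rnot_lt_le. intros Hneg.
    destruct (at_right_exists l (l + 1) _ ltac:(lra) (is_derive_neg_right _ _ _ Hd Hneg))
      as [y [Hy HEy]].
    pose proof (Ef_pos_above_lam y (proj1 Hy)). unfold l in HEy. rewrite Ef_lam in HEy. lra. }
  set (c := (INR N - 1) / alpha p). assert (Hc : 0 < c) by (apply Rdiv_lt_0_compat; lra).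
  destruct (is_derive_nonneg_left_bound _ _ _ (c * l / 2) Hd Hd0 ltac:(nra)) as [e He].
  exists (Rmin e (l / 2)). split.
  { split; [apply Rmin_pos; [apply cond_pos | lra] | pose proof (Rmin_r e (l / 2)); lra]. }
  intros z [Hz1 Hz2]. pose proof (Rmin_l e (l / 2)). pose proof (Rmin_r e (l / 2)).
  assert (HEz : Ef N p M z <= c * l / 2 * (l - z)).
  { replace (Ef N p M z) with (Ef N p M z - Ef N p M l) by (unfold l; rewrite Ef_lam; ring).
    apply He; [|lra]. change (Rabs (z - l) < e). rewrite Rabs_left1; lra. }
  assert (Hid : omega p X1 * Hf p M z - (INR N - 1) * z
                = omega p X1 * (Ef N p M z - c * z * (l - z))).
  { rewrite Hf_Ef. unfold c. rewrite <- (omega_lam X1). fold l.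
    pose proof (Rpower_pos X1 ((p - 1) / 2)). unfold omega in *. field. split; lra. }
  assert (Hw : 0 < omega p X1) by apply Rpower_pos.
  assert (0 <= c * ((l - z) * (z - l / 2))) by (apply Rmult_le_pos; [lra | apply Rmult_le_pos; lra]).
  assert (Ef N p M z - c * z * (l - z) <= 0) by nra.
  nra.
Qed.

End Root.
End Profile.

Definition xf (p : R) (u : R -> R) (r : R) : R := Rpower r (alpha p) * u r.
Definition yf (p : R) (u1 : R -> R) (r : R) : R := - (Rpower r (alpha p + 1) * u1 r).
Definition Qf (p : R) (u u1 : R -> R) (r : R) : R := yf p u1 r / xf p u r.
Definition Zf (p : R) (u u1 : R -> R) (r : R) : R := yf p u1 r * Rpower (xf p u r) (- beta p).

Definition solves_at (N : nat) (p M : R) (u u1 u2 : R -> R) (r : R) : Prop :=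
  0 < r /\ is_derive u r (u1 r) /\ is_derive u1 r (u2 r) /\ E_holds N p M r (u r) (u1 r) (u2 r).

Section Solution.

Variables (N : nat) (p M : R) (u u1 u2 : R -> R).
Hypothesis p_gt1 : 1 < p.

Let q := 2 * p / (p + 1).

Lemma xf_derive (r : R) : 0 < r -> is_derive u r (u1 r) ->
  is_derive (xf p u) r ((alpha p * xf p u r - yf p u1 r) / r).
Proof.
  intros Hr Hu. unfold xf, yf, Rpower. auto_derive.
  - split; [exact Hr|]. split; [|exact I]. now exists (u1 r).
  - replace (Derive (fun x => u x) r) with (u1 r) by (symmetry; now apply is_derive_unique).
    rewrite Rmult_plus_distr_r, !Rmult_1_l, exp_plus, exp_ln by exact Hr. field. lra.
Qed.

Lemma yf_derive (r : R) : solves_at N p M u u1 u2 r -> 0 < u r ->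
  exists dy, is_derive (yf p u1) r dy /\
    (u1 r < 0 -> r * dy = (alpha p + 2 - INR N) * yf p u1 r + Rpower (xf p u r) p
                          + M * Rpower (yf p u1 r) q).
Proof.
  intros [Hr [Hu [Hu1 HE]]] Hpos.
  eexists. split.
  { unfold yf, Rpower. auto_derive.
    - split; [exact Hr|]. split; [|exact I]. now exists (u2 r).
    - replace (Derive (fun x => u1 x) r) with (u2 r) by (symmetry; now apply is_derive_unique).
      reflexivity. }
  intros Hneg. fold (Rpower r (alpha p + 1)).
  set (U := u r) in *. set (V := - u1 r). assert (HV : 0 < V) by (unfold V; lra).
  set (A := Rpower r (alpha p)). assert (HA : 0 < A) by apply Rpower_pos.
  assert (HA1 : Rpower r (alpha p + 1) = A * r) by (unfold A; rewrite Rpower_plus, Rpower_1; lra).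
  assert (HA2 : Rpower r (alpha p + 2) = A * r ^ 2)
    by (unfold A; rewrite Rpower_plus, Rpower_2; lra).
  assert (HUp : Rpower U (p - 1) * U = Rpower U p)
    by (rewrite <- (Rpower_1 U) at 2 by lra; rewrite <- Rpower_plus; f_equal; ring).
  assert (Hxp : Rpower (xf p u r) p = A * r ^ 2 * (Rpower U (p - 1) * U)).
  { unfold xf. rewrite <- Rpower_mult_distr, Rpower_mult by (apply Rpower_pos || exact Hpos).
    replace (alpha p * p) with (alpha p + 2) by (unfold alpha; field; lra).
    now rewrite HA2, HUp. }
  assert (Hyq : Rpower (yf p u1 r) q = A * r ^ 2 * Rpower V q).
  { unfold yf. replace (- (Rpower r (alpha p + 1) * u1 r)) with (Rpower r (alpha p + 1) * V)
      by (unfold V; ring).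
    rewrite <- Rpower_mult_distr, Rpower_mult by (apply Rpower_pos || lra).
    replace ((alpha p + 1) * q) with (alpha p + 2) by (unfold alpha, q; field; lra).
    now rewrite HA2. }
  unfold E_holds in HE. fold U in HE.
  rewrite Rabs_pos_eq, Rabs_left, !powp_Rpower in HE by lra. fold V q in HE.
  rewrite Hxp, Hyq. unfold yf. rewrite HA1.
  replace (u2 r) with (- ((INR N - 1) / r * u1 r) - (Rpower U (p - 1) * U + M * Rpower V q)) by lra.
  replace (u1 r) with (- V) by (unfold V; ring).
  field. lra.
Qed.

Lemma xf_pos (r : R) : 0 < u r -> 0 < xf p u r.
Proof. intros Hu. unfold xf. apply Rmult_lt_0_compat; [apply Rpower_pos | exact Hu]. Qed.

Lemma Qf_derive (r : R) : solves_at N p M u u1 u2 r -> 0 < u r ->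
  exists dQ, is_derive (Qf p u u1) r dQ /\ (Qf p u u1 r = alpha p -> r * dQ = Xeq N p M (xf p u r)).
Proof.
  intros Hs Hpos. pose proof Hs as [Hr [Hu _]]. pose proof (alpha_pos p p_gt1) as Ha.
  destruct (yf_derive r Hs Hpos) as [dy [Hdy Hry]].
  pose proof (xf_pos r Hpos) as Hx.
  set (x := xf p u r) in *. set (y := yf p u1 r) in *.
  eexists. split.
  { apply (is_derive_div (yf p u1) (xf p u)); [exact Hdy | exact (xf_derive r Hr Hu) | fold x; lra]. }
  intros HQ. unfold Qf in HQ. fold x y in HQ.
  assert (Hy : y = alpha p * x) by (rewrite <- HQ; field; lra).
  assert (Hneg : u1 r < 0).
  { pose proof (Rpower_pos r (alpha p + 1)).
    assert (0 < y) by (rewrite Hy; nra). unfold y, yf in *. nra. }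
  specialize (Hry Hneg). fold x y in Hry.
  assert (Hxp : Rpower x p = Rpower x (p - 1) * x)
    by (rewrite <- (Rpower_1 x) at 3 by lra; rewrite <- Rpower_plus; f_equal; ring).
  assert (Hyq : Rpower y q = Rpower (alpha p) q * Rpower x ((p - 1) / (p + 1)) * x).
  { rewrite Hy, <- Rpower_mult_distr by (exact Ha || lra).
    rewrite <- (Rpower_1 x) at 3 by lra. rewrite Rmult_assoc, <- Rpower_plus.
    do 2 f_equal. unfold q. field. lra. }
  unfold Xeq. rewrite !powp_Rpower by (exact Ha || lra). fold q x y. fold (alpha p).
  replace (r * ((dy * x - y * ((alpha p * x - y) / r)) / x ^ 2)) with (r * dy / x)
    by (rewrite Hy; field; lra).
  rewrite Hry, Hxp, Hyq, Hy. unfold Kc, alpha. field. lra.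
Qed.

Lemma Zf_derive (r : R) : solves_at N p M u u1 u2 r -> 0 < u r ->
  exists dZ, is_derive (Zf p u u1) r dZ /\
    (u1 r < 0 -> r * dZ = omega p (xf p u r) * Hf p M (Zf p u u1 r) - (INR N - 1) * Zf p u u1 r).
Proof.
  intros Hs Hpos. pose proof Hs as [Hr [Hu _]].
  destruct (yf_derive r Hs Hpos) as [dy [Hdy Hry]].
  pose proof (xf_derive r Hr Hu) as Hdx. pose proof (xf_pos r Hpos) as Hx.
  eexists. split.
  { unfold Zf, Rpower. auto_derive.
    - split; [now exists dy|]. split; [now exists ((alpha p * xf p u r - yf p u1 r) / r)|].
      split; [exact Hx | exact I].
    - replace (Derive (fun x => yf p u1 x) r) with dy by (symmetry; now apply is_derive_unique).
      replace (Derive (fun x => xf p u x) r) with ((alpha p * xf p u r - yf p u1 r) / r)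
        by (symmetry; now apply is_derive_unique).
      reflexivity. }
  intros Hneg. specialize (Hry Hneg). fold (Rpower (xf p u r) (- beta p)).
  set (x := xf p u r) in *. set (y := yf p u1 r) in *.
  set (B := Rpower x (- beta p)). set (W := omega p x).
  assert (HW : 0 < W) by apply Rpower_pos.
  assert (HB : B = / (W * x)).
  { apply (Rmult_eq_reg_r (W * x)); [|nra]. rewrite Rinv_l by nra.
    unfold B, W, omega. rewrite <- (Rpower_1 x) at 3 by lra. rewrite <- !Rpower_plus.
    replace (- beta p + ((p - 1) / 2 + 1)) with 0 by (unfold beta; field). now apply Rpower_O. }
  assert (Hxp : Rpower x p = W ^ 2 * x).
  { unfold W, omega. rewrite <- (Rpower_1 x) at 3 by lra. rewrite <- Rpower_2, Rpower_mult,
      <- Rpower_plus by apply Rpower_pos. f_equal. field. }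
  assert (HBq : Rpower B q = / (W ^ 2 * x)).
  { unfold B. rewrite Rpower_mult, <- Hxp.
    replace (- beta p * q) with (- p) by (unfold beta, q; field; lra).
    now rewrite Rpower_Ropp. }
  assert (Hy : 0 < y) by (pose proof (Rpower_pos r (alpha p + 1)); unfold y, yf; nra).
  unfold Zf, Hf. fold x y B q.
  rewrite <- Rpower_mult_distr, HBq by (exact Hy || apply Rpower_pos).
  replace (r * (1 * dy * B + y * (- beta p * (1 * ((alpha p * x - y) / r) * / x) * B)))
    with (r * dy * B - beta p * y * B * (alpha p * x - y) / x) by (field; lra).
  rewrite Hry, Hxp, HB. unfold beta, alpha. field. lra.
Qed.

Lemma yf_Zf (r : R) : 0 < u r -> yf p u1 r = Zf p u u1 r * Rpower (xf p u r) (beta p).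
Proof.
  intros Hpos. unfold Zf. rewrite Rmult_assoc, <- Rpower_plus, Rplus_opp_l, Rpower_O by
    exact (xf_pos r Hpos). ring.
Qed.

Lemma Qf_Zf (r : R) : 0 < u r -> Qf p u u1 r = Zf p u u1 r * omega p (xf p u r).
Proof.
  intros Hpos. pose proof (xf_pos r Hpos) as Hx. unfold Qf, Zf, omega.
  rewrite Rmult_assoc, <- Rpower_plus.
  replace (- beta p + (p - 1) / 2) with (- (1)) by (unfold beta; field).
  rewrite Rpower_Ropp, Rpower_1 by exact Hx. reflexivity.
Qed.

Lemma Zf_eq_u (r : R) : 0 < r -> 0 < u r -> Zf p u u1 r = - u1 r * Rpower (u r) (- beta p).
Proof.
  intros Hr Hpos. unfold Zf, yf, xf.
  rewrite <- Rpower_mult_distr, Rpower_mult by (apply Rpower_pos || exact Hpos).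
  replace (alpha p * - beta p) with (- (alpha p + 1)) by (unfold alpha, beta; field; lra).
  rewrite Rpower_Ropp. pose proof (Rpower_pos r (alpha p + 1)). field. lra.
Qed.

Lemma u1_neg_of_Zf_pos (r : R) : 0 < u r -> 0 < Zf p u u1 r -> u1 r < 0.
Proof.
  intros Hpos HZ. unfold Zf, yf in HZ.
  pose proof (Rpower_pos r (alpha p + 1)). pose proof (Rpower_pos (xf p u r) (- beta p)).
  assert (0 < - (Rpower r (alpha p + 1) * u1 r))
    by (apply (Rmult_lt_reg_r (Rpower (xf p u r) (- beta p))); lra).
  nra.
Qed.

Lemma solves_at_continuous_u (r : R) : solves_at N p M u u1 u2 r -> continuous u r.
Proof. intros [_ [Hu _]]. apply (ex_derive_continuous u). now exists (u1 r). Qed.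

Lemma solves_at_continuous_xf (r : R) : solves_at N p M u u1 u2 r -> continuous (xf p u) r.
Proof.
  intros [Hr [Hu _]]. apply (ex_derive_continuous (xf p u)). eexists. now apply xf_derive.
Qed.

Lemma solves_at_continuous_Qf (r : R) :
  solves_at N p M u u1 u2 r -> 0 < u r -> continuous (Qf p u u1) r.
Proof.
  intros Hs Hpos. destruct (Qf_derive r Hs Hpos) as [d [Hd _]].
  apply (ex_derive_continuous (Qf p u u1)). now exists d.
Qed.

Lemma solves_at_continuous_Zf (r : R) :
  solves_at N p M u u1 u2 r -> 0 < u r -> continuous (Zf p u u1) r.
Proof.
  intros Hs Hpos. destruct (Zf_derive r Hs Hpos) as [d [Hd _]].
  apply (ex_derive_continuous (Zf p u u1)). now exists d.
Qed.

Lemma traj_x_exp (t : R) : traj_x p u t = xf p u (exp t).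
Proof. unfold traj_x, xf. now rewrite powp_Rpower by apply exp_pos. Qed.

Lemma traj_y_exp (t : R) : is_derive u (exp t) (u1 (exp t)) -> traj_y p u t = yf p u1 (exp t).
Proof.
  intros Hd. unfold traj_y, yf. rewrite powp_Rpower by apply exp_pos.
  rewrite (is_derive_unique _ _ _ Hd). do 3 f_equal. unfold alpha. field. lra.
Qed.

Lemma Qf_on_line (r : R) : 0 < u r -> yf p u1 r = alpha p * xf p u r -> Qf p u u1 r = alpha p.
Proof. intros Hpos Hy. pose proof (xf_pos r Hpos). unfold Qf. rewrite Hy. field. lra. Qed.

End Solution.

Section Crossing.

Variables (N : nat) (p M X1 del : R) (u u1 u2 : R -> R).
Hypothesis p_gt1 : 1 < p.
Hypothesis Kc_neg : Kc N p < 0.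
Hypothesis N_gt1 : 1 < INR N.
Hypothesis X1_root : is_X1 N p M X1.
Hypothesis del_range : 0 < del < lam p X1.
Hypothesis Hf_bound :
  forall z, lam p X1 - del < z <= lam p X1 -> omega p X1 * Hf p M z <= (INR N - 1) * z.
Hypothesis Zf_small_at_0 : forall c, 0 < c -> at_right 0 (fun r => 0 < u r /\ Zf p u u1 r < c).

Let lam_gt0 : 0 < lam p X1 := lam_pos p p_gt1 X1.

Lemma Zf_derive_neg (r : R) : solves_at N p M u u1 u2 r -> 0 < u r -> xf p u r < X1 ->
  lam p X1 - del < Zf p u u1 r <= lam p X1 -> exists d, is_derive (Zf p u u1) r d /\ d < 0.
Proof.
  intros Hs Hpos Hx HZ. pose proof Hs as [Hr _].
  destruct (Zf_derive N p M u u1 u2 p_gt1 r Hs Hpos) as [d [Hd Hrd]]. exists d. split; [exact Hd|].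
  specialize (Hrd (u1_neg_of_Zf_pos p u u1 r Hpos ltac:(lra))).
  pose proof (xf_pos p u r Hpos) as Hx0.
  assert (Hom : omega p (xf p u r) < omega p X1) by now apply omega_lt.
  assert (Hom0 : 0 < omega p (xf p u r)) by apply Rpower_pos.
  specialize (Hf_bound _ HZ).
  assert (r * d < 0).
  { rewrite Hrd. assert (0 < (INR N - 1) * Zf p u u1 r) by (apply Rmult_lt_0_compat; lra).
    destruct (Rle_lt_dec (Hf p M (Zf p u u1 r)) 0) as [Hneg|Hpos'].
    - assert (omega p (xf p u r) * Hf p M (Zf p u u1 r) <= 0) by nra. lra.
    - assert (omega p (xf p u r) * Hf p M (Zf p u u1 r) < omega p X1 * Hf p M (Zf p u u1 r))
        by (apply Rmult_lt_compat_r; lra).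
      lra. }
  nra.
Qed.

Lemma Qf_derive_pos (r : R) : solves_at N p M u u1 u2 r -> 0 < u r -> xf p u r < X1 ->
  Qf p u u1 r = alpha p -> exists d, is_derive (Qf p u u1) r d /\ 0 < d.
Proof.
  intros Hs Hpos Hx HQ. pose proof Hs as [Hr _].
  destruct (Qf_derive N p M u u1 u2 p_gt1 r Hs Hpos) as [d [Hd Hrd]]. exists d. split; [exact Hd|].
  specialize (Hrd HQ).
  pose proof (Xeq_pos_below_X1 N p M p_gt1 X1 X1_root Kc_neg (xf p u r)
                (conj (xf_pos p u r Hpos) Hx)).
  nra.
Qed.

Lemma lam_lt_Zf_on_line (r : R) : 0 < u r -> xf p u r < X1 -> Qf p u u1 r = alpha p ->
  lam p X1 < Zf p u u1 r.
Proof.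
  intros Hpos Hx HQ. rewrite (Qf_Zf p u u1 r Hpos) in HQ.
  pose proof (xf_pos p u r Hpos) as Hx0.
  assert (Hom : omega p (xf p u r) < omega p X1) by now apply omega_lt.
  assert (Hom0 : 0 < omega p (xf p u r)) by apply Rpower_pos.
  pose proof (omega_lam p X1) as Hl. nra.
Qed.

Lemma Rpower_xf_beta_lt (r : R) : 0 < u r -> xf p u r < X1 ->
  0 < Rpower (xf p u r) (beta p) < Rpower X1 (beta p).
Proof.
  intros Hpos Hx. split; [apply Rpower_pos|].
  apply Rlt_Rpower_l; [unfold beta; lra | split; [exact (xf_pos p u r Hpos) | exact Hx]].
Qed.

Let region (s : R) : Prop := 0 < u s /\ lam p X1 < Zf p u u1 s /\ Qf p u u1 s < alpha p.

Lemma region_open (r : R) : solves_at N p M u u1 u2 r -> region r -> locally r region.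
Proof.
  intros Hs [Hpos [HZ HQ]].
  apply filter_and; [|apply filter_and].
  - exact (continuous_locally_gt _ _ _ (solves_at_continuous_u N p M u u1 u2 r Hs) Hpos).
  - exact (continuous_locally_gt _ _ _ (solves_at_continuous_Zf N p M u u1 u2 p_gt1 r Hs Hpos) HZ).
  - exact (continuous_locally_lt _ _ _ (solves_at_continuous_Qf N p M u u1 u2 p_gt1 r Hs Hpos) HQ).
Qed.

Lemma region_left_of_line (r1 : R) : solves_at N p M u u1 u2 r1 ->
  0 < u r1 -> Qf p u u1 r1 = alpha p -> xf p u r1 < X1 ->
  at_left r1 (fun s => region s /\ xf p u s < X1).
Proof.
  intros Hs1 Hu1 HQ1 Hx1.
  destruct (Qf_derive_pos r1 Hs1 Hu1 Hx1 HQ1) as [dq [Hdq Hdq0]].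
  apply filter_and; [apply filter_and; [|apply filter_and]|].
  - apply filter_le_within.
    exact (continuous_locally_gt _ _ _ (solves_at_continuous_u N p M u u1 u2 r1 Hs1) Hu1).
  - apply filter_le_within.
    apply (continuous_locally_gt _ _ _ (solves_at_continuous_Zf N p M u u1 u2 p_gt1 r1 Hs1 Hu1)).
    now apply lam_lt_Zf_on_line.
  - rewrite <- HQ1. exact (is_derive_pos_left _ _ _ Hdq Hdq0).
  - apply filter_le_within.
    exact (continuous_locally_lt _ _ _ (solves_at_continuous_xf N p M u u1 u2 r1 Hs1) Hx1).
Qed.

Lemma region_monotone (rs r2 : R) : rs < r2 ->
  (forall c, rs <= c <= r2 -> solves_at N p M u u1 u2 c) -> (forall c, rs < c <= r2 -> region c) ->
  u r2 < u rs /\ xf p u rs < xf p u r2.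
Proof.
  intros Hrs Hsol Hreg. split.
  - apply (derive_neg_decreasing u u1 rs r2 Hrs).
    + intros c Hc. apply (Hsol c Hc).
    + intros c Hc. destruct (Hreg c ltac:(lra)) as [Hu [HZ _]].
      apply (u1_neg_of_Zf_pos p u u1 c Hu). lra.
  - apply (derive_pos_increasing _ (fun r => (alpha p * xf p u r - yf p u1 r) / r) rs r2 Hrs).
    + intros c Hc. destruct (Hsol c Hc) as [Hc0 [Hu _]]. now apply xf_derive.
    + intros c Hc. destruct (Hreg c ltac:(lra)) as [Hu [_ HQ]].
      destruct (Hsol c ltac:(lra)) as [Hc0 _].
      pose proof (xf_pos p u c Hu). unfold Qf in HQ.
      apply Rdiv_lt_0_compat; [|exact Hc0].
      replace (yf p u1 c) with (yf p u1 c / xf p u c * xf p u c) by (field; lra). nra.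
Qed.

Lemma region_extends_left (rs r2 : R) : rs < r2 ->
  (forall c, rs <= c <= r2 -> solves_at N p M u u1 u2 c) -> (forall c, rs < c <= r2 -> region c) ->
  0 < u rs -> xf p u rs < X1 -> region rs.
Proof.
  intros Hrs Hsol Hreg Hurs Hxrs.
  assert (Hsrs : solves_at N p M u u1 u2 rs) by (apply Hsol; lra).
  assert (HZrs : lam p X1 <= Zf p u u1 rs).
  { apply (continuous_closed_right _ (fun z => lam p X1 <= z) rs r2); [| apply closed_ge | lra |].
    - exact (solves_at_continuous_Zf N p M u u1 u2 p_gt1 rs Hsrs Hurs).
    - intros y Hy. left. apply Hreg. lra. }
  assert (HQrs : Qf p u u1 rs <= alpha p).
  { apply (continuous_closed_right _ (fun z => z <= alpha p) rs r2); [| apply closed_le | lra |].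
    - exact (solves_at_continuous_Qf N p M u u1 u2 p_gt1 rs Hsrs Hurs).
    - intros y Hy. left. apply Hreg. lra. }
  destruct (Req_dec (Zf p u u1 rs) (lam p X1)) as [HZeq|HZne].
  - destruct (Zf_derive_neg rs Hsrs Hurs Hxrs ltac:(lra)) as [d [Hd Hd0]].
    destruct (at_right_exists rs r2 _ Hrs (is_derive_neg_right _ _ _ Hd Hd0)) as [y [Hy HZy]].
    destruct (Hreg y ltac:(lra)) as [_ [HZ _]]. lra.
  - destruct (Req_dec (Qf p u u1 rs) (alpha p)) as [HQeq|HQne].
    + destruct (Qf_derive_pos rs Hsrs Hurs Hxrs HQeq) as [d [Hd Hd0]].
      destruct (at_right_exists rs r2 _ Hrs (is_derive_pos_right _ _ _ Hd Hd0)) as [y [Hy HQy]].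
      destruct (Hreg y ltac:(lra)) as [_ [_ HQ]]. lra.
    + repeat split; lra.
Qed.

Lemma no_line_crossing_below_X1 (r1 : R) : 0 < r1 ->
  (forall r, 0 < r <= r1 -> solves_at N p M u u1 u2 r) ->
  0 < u r1 -> Qf p u u1 r1 = alpha p -> xf p u r1 < X1 -> False.
Proof.
  intros Hr1 Hsol Hu1 HQ1 Hx1.
  destruct (at_left_exists 0 r1 _ Hr1 (region_left_of_line r1 (Hsol r1 ltac:(lra)) Hu1 HQ1 Hx1))
    as [r2 [Hr2 [Hreg2 Hx2]]].
  destruct (at_right_exists 0 r2 _ (proj1 Hr2) (Zf_small_at_0 _ lam_gt0)) as [lo [Hlo [_ HZlo]]].
  destruct (last_exit region lo r2) as [rs [Hrs [Hout Hreg]]].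
  - lra.
  - intros [_ [HZ _]]. lra.
  - exact Hreg2.
  - intros r Hr. apply region_open, Hsol. lra.
  - assert (Hsol' : forall c, rs <= c <= r2 -> solves_at N p M u u1 u2 c) by (intros; apply Hsol; lra).
    destruct (region_monotone rs r2 (proj2 Hrs) Hsol' Hreg) as [Hu Hx].
    destruct Hreg2 as [Hu2 _].
    apply Hout, (region_extends_left rs r2); [lra | exact Hsol' | exact Hreg | lra | lra].
Qed.

Section Global.

Hypothesis sol_global : forall r, 0 < r -> solves_at N p M u u1 u2 r.
Hypothesis below_X1 : forall r, 0 < r -> 0 < u r /\ xf p u r < X1.

Lemma Zf_le_lam (r1 : R) : 0 < r1 -> Zf p u u1 r1 <= lam p X1.
Proof.
  intros Hr1. apply Rnot_lt_le. intros HZ1.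
  destruct (at_right_exists 0 r1 _ Hr1 (Zf_small_at_0 _ lam_gt0)) as [lo [Hlo [_ HZlo]]].
  destruct (last_exit (fun s => lam p X1 < Zf p u u1 s) lo r1) as [rs [Hrs [Hout Hright]]].
  - lra.
  - lra.
  - exact HZ1.
  - intros r Hr HZ. apply continuous_locally_gt; [|exact HZ].
    apply (solves_at_continuous_Zf N p M u u1 u2 p_gt1); [apply sol_global; lra | apply below_X1; lra].
  - assert (Hsrs : solves_at N p M u u1 u2 rs) by (apply sol_global; lra).
    destruct (below_X1 rs ltac:(lra)) as [Hurs Hxrs].
    assert (HZrs : lam p X1 <= Zf p u u1 rs).
    { apply (continuous_closed_right _ (fun z => lam p X1 <= z) rs r1); [| apply closed_ge | lra |].
      - exact (solves_at_continuous_Zf N p M u u1 u2 p_gt1 rs Hsrs Hurs).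
      - intros y Hy. left. apply Hright. lra. }
    destruct (Zf_derive_neg rs Hsrs Hurs Hxrs ltac:(lra)) as [d [Hd Hd0]].
    destruct (at_right_exists rs r1 _ (proj2 Hrs) (is_derive_neg_right _ _ _ Hd Hd0))
      as [y [Hy HZy]].
    specialize (Hright y ltac:(lra)). lra.
Qed.

Lemma Zf_decreasing_near_lam (a b : R) : 0 < a < b ->
  (forall c, a <= c <= b -> lam p X1 - del < Zf p u u1 c) -> Zf p u u1 b < Zf p u u1 a.
Proof.
  intros Hab Hnear.
  assert (Hd : forall c, a <= c <= b -> exists d, is_derive (Zf p u u1) c d /\ d < 0).
  { intros c Hc. destruct (below_X1 c ltac:(lra)) as [Hu Hx].
    apply (Zf_derive_neg c (sol_global c ltac:(lra)) Hu Hx).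
    split; [exact (Hnear c Hc) | apply Zf_le_lam; lra]. }
  apply (derive_neg_decreasing _ (Derive (Zf p u u1)) a b (proj2 Hab)).
  - intros c Hc. destruct (Hd c Hc) as [d [Hdc _]]. now rewrite (is_derive_unique _ _ _ Hdc).
  - intros c Hc. destruct (Hd c ltac:(lra)) as [d [Hdc Hd0]]. now rewrite (is_derive_unique _ _ _ Hdc).
Qed.

Lemma Zf_eventually_near_lam : is_lim (yf p u1) p_infty (alpha p * X1) ->
  exists T, 0 < T /\ forall r, T < r -> lam p X1 - del < Zf p u u1 r.
Proof.
  intros Hlim. destruct X1_root as [HX1 _].
  set (S := Rpower X1 (beta p)). assert (HS : 0 < S) by apply Rpower_pos.
  apply is_lim_spec in Hlim.
  destruct (Hlim (mkposreal (del * S) ltac:(nra))) as [T HT].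
  exists (Rmax T 1). split; [pose proof (Rmax_r T 1); lra|].
  intros r Hr. pose proof (Rmax_l T 1). pose proof (Rmax_r T 1).
  specialize (HT r ltac:(lra)). simpl in HT. apply Rabs_def2 in HT.
  destruct (below_X1 r ltac:(lra)) as [Hu Hx].
  rewrite (yf_Zf p u u1 r Hu), <- (lam_Rpower_beta p X1 HX1) in HT. fold S in HT.
  pose proof (Rpower_xf_beta_lt r Hu Hx) as Hxs. fold S in Hxs.
  apply Rnot_le_lt. intros HZ.
  assert (Zf p u u1 r * Rpower (xf p u r) (beta p) <= (lam p X1 - del) * Rpower (xf p u r) (beta p))
    by (apply Rmult_le_compat_r; lra).
  assert ((lam p X1 - del) * Rpower (xf p u r) (beta p) < (lam p X1 - del) * S)
    by (apply Rmult_lt_compat_l; lra).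
  lra.
Qed.

Lemma yf_not_to_alpha_X1 : ~ is_lim (yf p u1) p_infty (alpha p * X1).
Proof.
  intros Hlim. destruct X1_root as [HX1 _].
  destruct (Zf_eventually_near_lam Hlim) as [T [HT Hnear]].
  set (zb := Zf p u u1 (T + 2)).
  assert (Hzb : zb < lam p X1).
  { apply Rlt_le_trans with (Zf p u u1 (T + 1)); [|apply Zf_le_lam; lra].
    apply Zf_decreasing_near_lam; [lra|]. intros c Hc. apply Hnear. lra. }
  set (S := Rpower X1 (beta p)). assert (HS : 0 < S) by apply Rpower_pos.
  apply is_lim_spec in Hlim.
  destruct (Hlim (mkposreal ((lam p X1 - zb) * S) ltac:(nra))) as [T2 HT2].
  set (r := Rmax T2 (T + 2) + 1).
  pose proof (Rmax_l T2 (T + 2)). pose proof (Rmax_r T2 (T + 2)).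
  specialize (HT2 r ltac:(unfold r; lra)). simpl in HT2. apply Rabs_def2 in HT2.
  destruct (below_X1 r ltac:(unfold r; lra)) as [Hu Hx].
  rewrite (yf_Zf p u u1 r Hu), <- (lam_Rpower_beta p X1 HX1) in HT2. fold S in HT2.
  pose proof (Rpower_xf_beta_lt r Hu Hx) as Hxs. fold S in Hxs.
  assert (HZr : 0 < Zf p u u1 r < zb).
  { split; [pose proof (Hnear r ltac:(unfold r; lra)); lra|].
    apply Zf_decreasing_near_lam; [unfold r; lra|]. intros c Hc. apply Hnear. lra. }
  assert (Zf p u u1 r * Rpower (xf p u r) (beta p) < zb * S).
  { apply Rlt_trans with (Zf p u u1 r * S); [apply Rmult_lt_compat_l | apply Rmult_lt_compat_r]; lra. }
  lra.
Qed.

End Global.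

Lemma traj_not_increasing_to_P1 : (forall r, 0 < r -> solves_at N p M u u1 u2 r) ->
  is_lim (traj_x p u) p_infty X1 -> is_lim (traj_y p u) p_infty (2 / (p - 1) * X1) ->
  (forall t s, t < s -> traj_x p u t < traj_x p u s) -> False.
Proof.
  intros Hsol Hlx Hly Hinc.
  assert (Hx : forall r, 0 < r -> xf p u r < X1).
  { intros r Hr. rewrite <- (exp_ln r), <- traj_x_exp by exact Hr.
    exact (strictly_increasing_lt_lim _ _ Hinc Hlx (ln r)). }
  assert (Hu : forall r, 0 < r -> 0 < u r).
  { intros r Hr. destruct (at_right_exists 0 r _ Hr (Zf_small_at_0 1 Rlt_0_1)) as [lo [Hlo [Hulo _]]].
    pose proof (Hinc (ln lo) (ln r) ltac:(apply ln_increasing; lra)) as Hlr.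
    rewrite !traj_x_exp, !exp_ln in Hlr by lra.
    pose proof (xf_pos p u lo Hulo). pose proof (Rpower_pos r (alpha p)). unfold xf in *. nra. }
  apply (yf_not_to_alpha_X1 Hsol (fun r Hr => conj (Hu r Hr) (Hx r Hr))).
  apply (is_lim_p_infty_ln (traj_y p u)); [|exact Hly].
  intros r Hr. destruct (Hsol r Hr) as [_ [Hd _]].
  rewrite (traj_y_exp p u u1), exp_ln by (rewrite ?exp_ln; assumption). reflexivity.
Qed.

Lemma traj_no_line_crossing_below_X1 (t : R) :
  (forall r, 0 < r <= exp t -> solves_at N p M u u1 u2 r) ->
  traj_y p u t = 2 / (p - 1) * traj_x p u t -> 0 < traj_x p u t < X1 -> False.
Proof.
  intros Hsol Hy [Hx0 HxX]. pose proof (exp_pos t) as Hr1.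
  destruct (Hsol (exp t) ltac:(lra)) as [_ [Hd _]].
  rewrite traj_x_exp in Hx0, HxX, Hy. rewrite (traj_y_exp p u u1) in Hy by assumption.
  assert (Hu1 : 0 < u (exp t))
    by (unfold xf in Hx0; pose proof (Rpower_pos (exp t) (alpha p)); nra).
  exact (no_line_crossing_below_X1 (exp t) Hr1 Hsol Hu1 (Qf_on_line p u u1 _ Hu1 Hy) HxX).
Qed.

End Crossing.

Lemma Zf_small_near_0 (p : R) (u u1 : R -> R) : 1 < p -> 0 < u 0 -> u1 0 = 0 ->
  filterlim u (at_right 0) (locally (u 0)) -> filterlim u1 (at_right 0) (locally (u1 0)) ->
  forall c, 0 < c -> at_right 0 (fun r => 0 < u r /\ Zf p u u1 r < c).
Proof.
  intros Hp Hu0 H10 Hu Hu1 c Hc.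
  set (A := Rpower (u 0 / 2) (beta p)). assert (HA : 0 < A) by apply Rpower_pos.
  assert (Hlow : at_right 0 (fun r => u 0 / 2 < u r)) by (apply Hu, open_gt; lra).
  assert (Hder : at_right 0 (fun r => - (c * A) < u1 r)) by (apply Hu1, open_gt; nra).
  generalize (filter_and _ _ Hlow Hder). unfold at_right, within. apply filter_imp.
  intros r Hnear Hr. destruct (Hnear Hr) as [Hur Hu1r]. split; [lra|].
  rewrite (Zf_eq_u p u u1 Hp r Hr) by lra.
  assert (HP : Rpower (u r) (- beta p) <= / A).
  { rewrite Rpower_Ropp. apply Rinv_le_contravar; [exact HA|].
    apply Rle_Rpower_l; [unfold beta; lra | lra]. }
  pose proof (Rpower_pos (u r) (- beta p)).
  destruct (Rle_lt_dec 0 (u1 r)); [nra|].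
  apply Rle_lt_trans with (- u1 r * / A); [apply Rmult_le_compat_l; lra|].
  apply (Rmult_lt_reg_r A); [exact HA|]. rewrite Rmult_assoc, Rinv_l, Rmult_1_r by lra. lra.
Qed.

Lemma subcritical_range (N : nat) (p : R) :
  ((3 <= N)%nat /\ 1 < p /\ p < INR N / (INR N - 2) \/ N = 2%nat /\ 1 < p) ->
  1 < p /\ Kc N p < 0 /\ 1 < INR N.
Proof.
  intros HNp.
  assert (Hrange : 1 < p /\ (INR N - 2) * p < INR N /\ 1 < INR N).
  { destruct HNp as [[HN [Hp Hp2]] | [-> Hp]]; [|simpl; lra].
    apply le_INR in HN. simpl in HN. split; [exact Hp|]. split; [|lra].
    apply (Rmult_lt_compat_l (INR N - 2)) in Hp2; [|lra].
    replace ((INR N - 2) * (INR N / (INR N - 2))) with (INR N) in Hp2 by (field; lra). lra. }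
  destruct Hrange as [Hp [HK HN]]. split; [exact Hp|]. split; [|exact HN].
  assert (Kc N p * (p - 1) = (INR N - 2) * p - INR N) by (unfold Kc; field; lra). nra.
Qed.

Lemma regular_solution_data (N : nat) (p M u0 : R) (u : R -> R) (r0 : Rbar) : 1 < p ->
  regular_solution N p M u0 u r0 ->
  exists u1 u2, (forall r, 0 < r -> Rbar_lt r r0 -> solves_at N p M u u1 u2 r) /\
    (forall c, 0 < c -> at_right 0 (fun r => 0 < u r /\ Zf p u u1 r < c)).
Proof.
  intros Hp [Hu0 [<- [[_ [u1 [u2 [Hsol [Hd1 [Hd2 [_ H10]]]]]]] _]]].
  exists u1, u2. split.
  - intros r Hr Hrr0. destruct (Hsol r Hr Hrr0) as [? [? [_ ?]]]. now split.
  - exact (Zf_small_near_0 p u u1 Hp Hu0 H10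
             (rderive_right_continuous _ _ Hd1) (rderive_right_continuous _ _ Hd2)).
Qed.

Theorem lemma4p6 (N : nat) (p M u0 X1 : R) (u : R -> R) (r0 : Rbar) :
  ((3 <= N)%nat /\ 1 < p /\ p < INR N / (INR N - 2) \/ N = 2%nat /\ 1 < p) ->
  M <= - mu_star N p ->
  is_X1 N p M X1 ->
  regular_solution N p M u0 u r0 ->
  (* (i) no convergence to P_{1,M} as t -> oo with x increasing *)
  ~ (r0 = p_infty /\
     is_lim (traj_x p u) p_infty X1 /\
     is_lim (traj_y p u) p_infty (2 / (p - 1) * X1) /\
     (forall t s, t < s -> traj_x p u t < traj_x p u s)) /\
  (* (ii) no intersection with the half-line y = 2/(p-1) x strictly between
     (0,0) and P_{1,M} *)
  ~ (exists t, Rbar_lt (exp t) r0 /\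
       traj_y p u t = 2 / (p - 1) * traj_x p u t /\
       0 < traj_x p u t < X1).
Proof.
  (* [M <= - mu_star N p] only guarantees that X_{1,M} exists, which [is_X1] already asserts. *)
  intros HNp _ HX Hreg.
  destruct (subcritical_range N p HNp) as [Hp [HK HN]].
  destruct (regular_solution_data N p M u0 u r0 Hp Hreg) as [u1 [u2 [Hsol Hsmall]]].
  destruct (Hf_le_below_lam N p M Hp X1 HX HK HN) as [del [Hdel Hbound]].
  split.
  - intros [-> [Hlx [Hly Hinc]]].
    apply (traj_not_increasing_to_P1 N p M X1 del u u1 u2 Hp HN HX Hdel Hbound Hsmall);
      [intros r Hr; now apply Hsol | exact Hlx | exact Hly | exact Hinc].
  - intros [t [Ht [Hy Hx]]].
    apply (traj_no_line_crossing_below_X1 N p M X1 del u u1 u2 Hp HK HN HX Hdel Hbound Hsmall t);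
      [| exact Hy | exact Hx].
    intros r Hr. apply Hsol; [lra|]. destruct r0; simpl in *; [lra | exact I | contradiction].
Qed.
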